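(* Let $M$ be a centrally endo-AIP right $R$-module with $S=\mathrm{End}_R(M)$. If $\mathrm{u.dim}(S_S)=1$, then $S$ is a prime ring.
   Context: For $N\le M$, $l_S(N)=\{\phi\in S:\phi(N)=0\}$. An ideal $I$ of $S$ is centrally s-unital if for every $a\in I$ there is $z\in I$ central in $S$ with $az=a$. $M$ is centrally endo-AIP if $l_S(N)$ is a centrally s-unital ideal of $S$ for every fully invariant submodule $N$ of $M$. $\mathrm{u.dim}(S_S)=1$ means $S_S$ has uniform dimension $1$ (i.e. $S_S$ is uniform). *)

From mathcomp Require Import all_boot all_order all_algebra.
Set Implicit Arguments. Unset Strict Implicit. Unset Printing Implicit Defensive.
Import GRing.Theory.
Local Open Scope ring_scope.

(* A right R-module M is modelled as a left module over the converse ring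
   [R^c] (= R^op): the scalar action [r *: m] stands for [m r]. *)

Section EndoAIP.
Variables (R : nzRingType) (M : lmodType R^c).

Definition is_endo (f : M -> M) : Prop :=
  (forall x y, f (x + y) = f x + f y) /\ (forall (r : R^c) x, f (r *: x) = r *: f x).

Definition endo_mul (f g : M -> M) : M -> M := fun m => f (g m).
Definition endo_zero : M -> M := fun _ => 0.
Definition endo_eq (f g : M -> M) : Prop := forall m, f m = g m.

Definition is_submodule (N : M -> Prop) : Prop :=
  [/\ N 0, (forall x y, N x -> N y -> N (x + y)), (forall x, N x -> N (- x))
    & (forall (r : R^c) x, N x -> N (r *: x))].

Definition fully_invariant (N : M -> Prop) : Prop :=
  is_submodule N /\ forall f, is_endo f -> forall m, N m -> N (f m).

Definition lS (N : M -> Prop) (f : M -> M) : Prop :=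
  is_endo f /\ forall m, N m -> f m = 0.

Definition is_right_ideal (I : (M -> M) -> Prop) : Prop :=
  [/\ (forall a, I a -> is_endo a), I endo_zero,
      (forall a b, I a -> I b -> I (fun m => a m + b m)),
      (forall a, I a -> I (fun m => - a m))
    & (forall a s, I a -> is_endo s -> I (endo_mul a s))].

Definition is_ideal (I : (M -> M) -> Prop) : Prop :=
  is_right_ideal I /\ (forall a s, I a -> is_endo s -> I (endo_mul s a)).

Definition central_in_S (z : M -> M) : Prop :=
  is_endo z /\ forall s, is_endo s -> endo_eq (endo_mul z s) (endo_mul s z).

Definition centrally_s_unital (I : (M -> M) -> Prop) : Prop :=
  is_ideal I /\
  forall a, I a -> exists z, [/\ I z, central_in_S z & endo_eq (endo_mul a z) a].

Definition centrally_endo_AIP : Prop :=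
  forall N, fully_invariant N -> centrally_s_unital (lS N).

Definition nonzero_set (I : (M -> M) -> Prop) : Prop :=
  exists a, I a /\ ~ endo_eq a endo_zero.

(* u.dim(S_S) = 1, i.e. S_S is uniform: S_S <> 0 and any two nonzero
   submodules (= right ideals) of S_S intersect nontrivially. *)
Definition S_uniform : Prop :=
  nonzero_set is_endo /\
  forall A B, is_right_ideal A -> is_right_ideal B -> nonzero_set A -> nonzero_set B ->
    nonzero_set (fun a => A a /\ B a).

Definition S_prime : Prop :=
  nonzero_set is_endo /\
  forall A B, is_ideal A -> is_ideal B ->
    (forall a b, A a -> B b -> endo_eq (endo_mul a b) endo_zero) ->
    ~ nonzero_set A \/ ~ nonzero_set B.

End EndoAIP.

(* Take c != 0 in A ∩ B, which uniformity provides.  Its annihilator N in M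
   of the right ideal A is fully invariant and c lies in l_S(N), so a central
   z in l_S(N) gives c = c z = z c.  Since A B = 0, c maps M into N, which z
   kills; hence c = 0, a contradiction. *)

From mathcomp Require Import all_boot all_order all_algebra.
From Stdlib Require Import Classical.

Set Implicit Arguments.
Unset Strict Implicit.
Unset Printing Implicit Defensive.
Import GRing.Theory.
Local Open Scope ring_scope.

#[local] Arguments endo_zero {R M} _.

Section EndoAIPPrime.
Variables (R : nzRingType) (M : lmodType R^c).

Lemma endo0 (f : M -> M) : is_endo f -> f 0 = 0.
Proof.
case=> fD _; apply: (addrI (f 0)).
by rewrite -fD !addr0.
Qed.

Lemma endoN (f : M -> M) x : is_endo f -> f (- x) = - f x.
Proof.
move=> endo_f; apply: (addrI (f x)).
by rewrite -(proj1 endo_f) !subrr endo0.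
Qed.

Definition r_ann (A : (M -> M) -> Prop) (m : M) : Prop :=
  forall a, A a -> a m = 0.

Lemma r_ann_submodule (A : (M -> M) -> Prop) :
  (forall a, A a -> is_endo a) -> is_submodule (r_ann A).
Proof.
move=> Aendo; split=> [a /Aendo/endo0 // | x y Nx Ny a Aa | x Nx a Aa | r x Nx a Aa].
- by rewrite (proj1 (Aendo a Aa)) Nx // Ny // addr0.
- by rewrite (endoN x (Aendo a Aa)) Nx // oppr0.
- by rewrite (proj2 (Aendo a Aa)) Nx // scaler0.
Qed.

Lemma r_ann_fully_invariant (A : (M -> M) -> Prop) :
  is_right_ideal A -> fully_invariant (r_ann A).
Proof.
case=> Aendo _ _ _ AM; split; first exact: r_ann_submodule.
by move=> f endo_f m Nm a Aa; apply: (Nm (endo_mul a f)); apply: AM.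
Qed.

Lemma lS_r_ann (A : (M -> M) -> Prop) c :
  (forall a, A a -> is_endo a) -> A c -> lS (r_ann A) c.
Proof. by move=> Aendo Ac; split=> [|m]; [exact: Aendo | apply]. Qed.

Lemma r_ann_mul_eq0 (A B : (M -> M) -> Prop) b m :
  (forall a b, A a -> B b -> endo_eq (endo_mul a b) endo_zero) ->
  B b -> r_ann A (b m).
Proof. by move=> AB0 Bb a Aa; apply: (AB0 a b). Qed.

Lemma lS_range_eq0 (N : M -> Prop) c :
  centrally_s_unital (lS N) -> lS N c -> (forall m, N (c m)) ->
  endo_eq c endo_zero.
Proof.
case=> _ unital Nc cN m.
have [z [[_ zN] [_ zC] czc]] := unital c Nc.
rewrite -czc -(zC c (proj1 Nc) m) /endo_mul.
exact: zN.
Qed.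

Lemma centrally_endo_AIP_meet_eq0 (A B : (M -> M) -> Prop) c :
  centrally_endo_AIP M -> is_right_ideal A ->
  (forall a b, A a -> B b -> endo_eq (endo_mul a b) endo_zero) ->
  A c -> B c -> endo_eq c endo_zero.
Proof.
move=> AIP rideal_A AB0 Ac Bc.
have [Aendo _ _ _ _] := rideal_A.
apply: (@lS_range_eq0 (r_ann A)).
- exact: AIP (r_ann_fully_invariant rideal_A).
- exact: lS_r_ann.
- move=> m; exact: r_ann_mul_eq0 AB0 Bc.
Qed.

End EndoAIPPrime.

Theorem corollary3p8 (R : nzRingType) (M : lmodType R^c) :
  centrally_endo_AIP M -> S_uniform M -> S_prime M.
Proof.
move=> AIP [S_nz uniform]; split=> // A B [rideal_A _] [rideal_B _] AB0.
case: (classic (nonzero_set A)) => [nzA|]; last by left.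
case: (classic (nonzero_set B)) => [nzB|]; last by right.
have [c [[Ac Bc] c_nz]] := uniform A B rideal_A rideal_B nzA nzB.
by case: c_nz; apply: (centrally_endo_AIP_meet_eq0 AIP rideal_A AB0).
Qed.
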